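(* Let $\kappa$ be an infinite limit cardinal. Then there exists a connected graph $G$ with $|V_G| = \kappa$ and chromatic number $\chi(G) = \kappa$ such that the complete graph $K_\kappa$ is not a minor of $G$.
   Context: A graph is a pair $G=(V,E)$ with $E \subseteq [V]^2$. $K_\kappa$ is the complete graph $(\kappa,[\kappa]^2)$. The chromatic number $\chi(G)$ is the least cardinal $\mu$ such that there is a map $c:V\to\mu$ with $c(u)\neq c(v)$ whenever $\{u,v\}\in E$. A graph $H$ is a minor of $G$ if there are pairwise disjoint non-empty sets $(X_u)_{u\in V_H}$ of vertices of $G$, each inducing a connected subgraph of $G$, such that for every edge $\{u,v\}$ of $H$ there are $x\in X_u$, $y\in X_v$ with $\{x,y\}$ an edge of $G$. *)

(* graphs on arbitrary (possibly infinite) types, cardinals as types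
   compared via injections. *)
From Stdlib Require Import Relations Relation_Operators.

Definition le_card (A B : Type) : Prop :=
  exists f : A -> B, forall x y, f x = f y -> x = y.
Definition lt_card (A B : Type) : Prop := le_card A B /\ ~ le_card B A.
Definition same_card (A B : Type) : Prop :=
  exists (f : A -> B) (g : B -> A),
    (forall x, g (f x) = x) /\ (forall y, f (g y) = y).

Definition infinite_card (K : Type) : Prop := le_card nat K.

(* K is a limit cardinal: not the successor of any smaller cardinal, i.e.
   for every cardinal mu < |K| there is a cardinal strictly between mu and |K|. *)
Definition limit_card (K : Type) : Prop :=
  forall mu : Type, lt_card mu K ->
    exists nu : Type, lt_card mu nu /\ lt_card nu K.

Definition is_graph {V : Type} (adj : V -> V -> Prop) : Prop :=
  (forall u v, adj u v -> adj v u) /\ (forall v, ~ adj v v).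

Definition connected_in {V : Type} (adj : V -> V -> Prop) (X : V -> Prop) : Prop :=
  forall x y, X x -> X y ->
    clos_refl_trans V (fun a b => X a /\ X b /\ adj a b) x y.

Definition connected {V : Type} (adj : V -> V -> Prop) : Prop :=
  connected_in adj (fun _ => True).

Definition proper_coloring {V C : Type} (adj : V -> V -> Prop) (c : V -> C) : Prop :=
  forall u v, adj u v -> c u <> c v.

Definition chromatic_number_is {V : Type} (adj : V -> V -> Prop) (K : Type) : Prop :=
  (exists c : V -> K, proper_coloring adj c) /\
  (forall mu : Type, lt_card mu K -> ~ exists c : V -> mu, proper_coloring adj c).

Definition is_minor {VH VG : Type} (adjH : VH -> VH -> Prop) (adjG : VG -> VG -> Prop) : Prop :=
  exists X : VH -> VG -> Prop,
    (forall u v x, u <> v -> X u x -> X v x -> False) /\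
    (forall u, exists x, X u x) /\
    (forall u, connected_in adjG (X u)) /\
    (forall u v, adjH u v -> exists x y, X u x /\ X v y /\ adjG x y).

Definition complete_adj (K : Type) : K -> K -> Prop := fun u v => u <> v.

From Stdlib Require Import Classical ClassicalEpsilon FunctionalExtensionality.
From Stdlib Require Import Wellfounded Relations RelationClasses List Arith Lia.
From mathcomp Require Import ssreflect ssrfun ssrbool.
From mathcomp Require eqtype boolp wochoice classical_sets cardinality.

Set Implicit Arguments.

(* Join a hub vertex to every other vertex, and partition the vertices into
   cliques, each of cardinality < κ but of cardinalities unbounded below κ; the
   cliques force χ = κ. In a K_κ minor at most one branch set contains the hub;
   every other one is connected without the hub, hence lies in a single clique,
   and since all of them touch a fixed one they lie in the same clique, which
   would then contain κ disjoint nonempty sets.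
   For κ = ℵ₀ the cliques are dyadic blocks of ℕ. For uncountable κ, well-order
   κ so that proper initial segments are smaller than κ and group the ordinals
   by the cardinality of their initial segment: the class of an infinite
   cardinal λ is [λ, λ⁺), of cardinality λ⁺ < κ because κ is a limit. *)

(** * Cardinal comparison *)

Lemma le_card_refl A : le_card A A.
Proof. by exists id. Qed.

Lemma le_card_trans A B C : le_card A B -> le_card B C -> le_card A C.
Proof. by move=> [f finj] [g ginj]; exists (g \o f) => x y /ginj /finj. Qed.

Lemma proj1_sig_inj A (P : A -> Prop) (x y : {a | P a}) : proj1_sig x = proj1_sig y -> x = y.
Proof. exact: eq_sig_hprop (fun a => proof_irrelevance (P a)) x y. Qed.

Lemma le_card_sig A (P : A -> Prop) : le_card {a | P a} A.
Proof. by exists (@proj1_sig _ _) => x y /proj1_sig_inj. Qed.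

Lemma le_card_sub A (P Q : A -> Prop) :
  (forall a, P a -> Q a) -> le_card {a | P a} {a | Q a}.
Proof.
move=> PQ; exists (fun x => exist Q (proj1_sig x) (PQ _ (proj2_sig x))).
by move=> x y [] /proj1_sig_inj.
Qed.

Lemma le_card_sum A A' B B' :
  le_card A A' -> le_card B B' -> le_card (A + B) (A' + B').
Proof.
move=> [f finj] [g ginj].
exists (fun s => match s with inl a => inl (f a) | inr b => inr (g b) end).
by move=> [a|b] [a'|b'] // [] => [/finj|/ginj] ->.
Qed.

Lemma le_card_of_rel A B (R : A -> B -> Prop) :
  (forall a, exists b, R a b) -> (forall a a' b, R a b -> R a' b -> a = a') ->
  le_card A B.
Proof.
move=> total functional; have [f Rf] := choice R total.
by exists f => a a' faa'; apply: (functional a a' (f a)); rewrite // faa'.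
Qed.

Lemma le_card_option_of_nat A : le_card nat A -> le_card (option A) A.
Proof.
move=> [g ginj].
pose shift x := match excluded_middle_informative (exists n, g n = x) with
  | left gx => g (S (proj1_sig (constructive_indefinite_description _ gx)))
  | right _ => x end.
have shiftP x : (exists n, g n = x /\ shift x = g (S n)) \/
                (forall n, g n <> x) /\ shift x = x.
  rewrite /shift; case: excluded_middle_informative => [gx|ngx].
  - by case: constructive_indefinite_description => n /= gn; left; exists n.
  - by right; split => // n gn; apply: ngx; exists n.
exists (fun o => if o is Some x then shift x else g 0).
move=> [x|] [y|] //.
- case: (shiftP x) => [[n [<- ->]]|[ngx ->]]; case: (shiftP y) => [[m [<- ->]]|[ngy ->]].
  + by move=> /ginj [->].
  + by move=> E; case: (ngy (S n)).
  + by move=> E; case: (ngx (S m)).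
  + by move=> ->.
- by case: (shiftP x) => [[n [_ ->]] /ginj|[ngx ->] E] //; case: (ngx 0).
- by case: (shiftP y) => [[n [_ ->]] /ginj|[ngy ->] E] //; case: (ngy 0).
Qed.

Lemma le_card_nat_option A : le_card nat (option A) -> le_card nat A.
Proof.
move=> [f finj].
have [k fk] : exists k, forall n, f (n + k) <> None.
  case: (classic (exists j, f j = None)) => [[j fj]|nofj].
  - by exists (S j) => n fn; have := finj _ _ (eq_trans fn (esym fj)); lia.
  - by exists 0 => n fn; apply: nofj; exists (n + 0).
have [a _] : exists a, f (0 + k) = Some a.
  by move: (fk 0); case: (f (0 + k)) => [a|] // _; exists a.
exists (fun n => if f (n + k) is Some x then x else a) => m n.
move: (fk m) (fk n) (finj (m + k) (n + k)).
case: (f (m + k)) => [x|] // _; case: (f (n + k)) => [y|] // _ inj xy.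
by have := inj (f_equal Some xy); lia.
Qed.

Lemma le_card_option_r A B : le_card nat A -> le_card A (option B) -> le_card A B.
Proof.
move=> natA AB; apply: (le_card_trans AB); apply: le_card_option_of_nat.
exact: le_card_nat_option (le_card_trans natA AB).
Qed.

Lemma nat_not_le_card_fin n : ~ le_card nat {i | i < n}.
Proof.
elim: n => [[f _]|n IH natn]; first by case: (f 0) => i /=; lia.
apply: IH; apply: le_card_nat_option; apply: (le_card_trans natn).
exists (fun i => match lt_dec (proj1_sig i) n with
  | left lt_i => Some (exist _ (proj1_sig i) lt_i) | right _ => None end).
move=> [i lt_i] [j lt_j] /=.
case: lt_dec => ?; case: lt_dec => ? //=;
  move=> /(f_equal (fun o => if o is Some k then proj1_sig k else n)) /= ij;
  apply: proj1_sig_inj => /=; lia.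
Qed.

Lemma le_card_nat_of_NoDup A :
  (forall k, exists l : list A, NoDup l /\ k <= length l) -> le_card nat A.
Proof.
move=> long.
have fresh (l : list A) : exists a, ~ In a l.
  apply: NNPP => nofresh; have [l' [l'_uniq l'_long]] := long (S (length l)).
  have : length l' <= length l; last lia.
  apply: NoDup_incl_length l'_uniq _ => a _; apply: NNPP => al; apply: nofresh; by exists a.
have [pick pickP] := choice _ fresh.
pose prefix := fix prefix n := if n is S n then pick (prefix n) :: prefix n else nil.
have prefix_mono m n : m < n -> In (pick (prefix m)) (prefix n).
  elim: n => [|n IH] mn /=; first lia.
  by case: (Nat.eq_dec m n) => [->|mn']; [left | right; apply: IH; lia].
exists (fun n => pick (prefix n)) => m n pmn.
case: (Nat.lt_trichotomy m n) => [mn|[//|nm]].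
- by case: (pickP (prefix n)); rewrite -pmn; apply: prefix_mono.
- by case: (pickP (prefix m)); rewrite pmn; apply: prefix_mono.
Qed.

Section SchroederBernstein.
Import boolp classical_sets cardinality.
Local Open Scope classical_set_scope.
Local Open Scope card_scope.

Lemma same_card_of_le_card A B : le_card A B -> le_card B A -> same_card A B.
Proof.
have setT_le (X Y : Type) : le_card X Y -> [set: X] #<= [set: Y].
  move=> [f finj]; rewrite -(card_le_eql (inj_card_eq (fun x y _ _ => finj x y))).
  exact: subset_card_le.
move=> /setT_le AB /setT_le BA.
have /card_bijP [F [G FG GF]] := Cantor_Bernstein AB BA.
pose inA (a : A) : [set: A] := exist _ a (mem_set I).
pose inB (b : B) : [set: B] := exist _ b (mem_set I).
exists (fun a => proj1_sig (F (inA a))), (fun b => proj1_sig (G (inB b))); split.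
- by move=> a; rewrite (_ : inB _ = F (inA a)) ?FG //; exact: proj1_sig_inj.
- by move=> b; rewrite (_ : inA _ = G (inB b)) ?GF //; exact: proj1_sig_inj.
Qed.
End SchroederBernstein.

(** * Hub graphs *)

Section HubGraph.
Variables (V : Type) (E : V -> V -> Prop) (h : V).

Definition hub_adj (x y : V) : Prop := x <> y /\ (x = h \/ y = h \/ E x y).

Lemma hub_adj_graph : Symmetric E -> is_graph hub_adj.
Proof.
move=> E_sym; split; last by move=> x [].
move=> x y [xy xyE]; split; first by move=> yx; apply: xy.
by case: xyE => [|[|/E_sym]]; auto.
Qed.

Lemma hub_adj_connected : connected hub_adj.
Proof.
have to_hub x : clos_refl_trans V (fun a b => True /\ True /\ hub_adj a b) x h.
  case: (classic (x = h)) => [->|xh]; first exact: rt_refl.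
  by apply: rt_step; do 2!split => //; split; auto.
move=> x y _ _; apply: rt_trans (to_hub x) _.
case: (classic (y = h)) => [->|yh]; first exact: rt_refl.
by apply: rt_step; do 2!split => //; split; auto.
Qed.

Lemma hub_adj_no_complete_minor K : Equivalence E -> infinite_card K ->
  (forall x, ~ le_card K {y | E x y}) -> ~ is_minor (complete_adj K) hub_adj.
Proof.
move=> E_equiv natK small [X [disj [inhab [conn adj]]]].
have in_class u x y : ~ X u h -> X u x -> X u y -> E x y.
  move=> uh ux uy; elim: (conn u x y ux uy) => [a b [ua [ub [_ abE]]]|a|a b c _ Eab _ Ebc].
  - by case: abE => [ah|[bh|//]]; [rewrite ah in ua | rewrite bh in ub].
  - reflexivity.
  - by transitivity b.
have [u0 u0h] : exists u0, ~ X u0 h.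
  case: natK => g ginj; case: (classic (X (g 0) h)) => [g0h|]; last by exists (g 0).
  by exists (g 1) => g1h; apply: (disj (g 0) (g 1) h) => // /ginj.
have [x0 u0x0] := inhab u0.
have meets_class u : ~ X u h -> exists y, X u y /\ E x0 y.
  move=> uh; case: (classic (u = u0)) => [->|uu0]; first by exists x0; split => //; reflexivity.
  have [x [y [u0x [uy [_ xyE]]]]] := adj u0 u (fun e => uu0 (esym e)).
  case: xyE => [xh|[yh|xy]]; [by rewrite xh in u0x | by rewrite yh in uy |].
  exists y; split => //; transitivity x => //; exact: in_class u0x0 u0x.
have K_off_hub : le_card K {u | ~ X u h}.
  apply: le_card_option_r => //.
  exists (fun u => match excluded_middle_informative (X u h) with
    | left _ => None | right uh => Some (exist _ u uh) end).
  move=> u v; do 2!case: excluded_middle_informative => ? //.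
  + by move=> _; apply: NNPP => uv; apply: (disj u v h).
  + by case.
have off_hub_in_class : le_card {u | ~ X u h} {y | E x0 y}.
  apply: (le_card_of_rel (fun u (y : {y | E x0 y}) => X (proj1_sig u) (proj1_sig y))).
  + by move=> [u uh]; have [y [uy x0y]] := meets_class u uh; exists (exist _ y x0y).
  + move=> [u ?] [v ?] [y ?] /= uy vy; apply: proj1_sig_inj => /=.
    by apply: NNPP => uv; apply: (disj u v y).
exact: small x0 (le_card_trans K_off_hub off_hub_in_class).
Qed.

Definition injective_on_classes C (c : V -> C) : Prop :=
  forall x y, E x y -> c x = c y -> x = y.

Lemma hub_adj_chromatic K : same_card V K ->
  (forall mu, lt_card mu K -> forall c : V -> mu, ~ injective_on_classes c) ->
  chromatic_number_is hub_adj K.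
Proof.
move=> [f [g [gf _]]] uncolourable; split.
- by exists f => u v [uv _] fuv; apply: uv; rewrite -(gf u) fuv gf.
- move=> mu muK [c c_proper]; apply: (uncolourable mu muK c) => x y xy cxy.
  by apply: NNPP => nxy; apply: (c_proper x y) => //; split; auto.
Qed.

End HubGraph.

Record cofinal_partition (K V : Type) (E : V -> V -> Prop) : Prop := {
  partition_equiv : Equivalence E;
  partition_card : same_card V K;
  partition_classes_small : forall x, ~ le_card K {y | E x y};
  partition_not_colourable :
    forall mu, lt_card mu K -> forall c : V -> mu, ~ injective_on_classes E c }.

Lemma not_injective_on_large_class V (E : V -> V -> Prop) mu x :
  Equivalence E -> ~ le_card {y | E x y} mu -> forall c : V -> mu, ~ injective_on_classes E c.
Proof.
move=> E_equiv large c c_inj; apply: large.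
exists (fun y => c (proj1_sig y)) => [[y xy] [z xz]] /= cyz; apply: proj1_sig_inj => /=.
by apply: c_inj cyz; transitivity x; [symmetry|].
Qed.

Lemma hub_adj_of_cofinal_partition K V (E : V -> V -> Prop) (h : V) :
  infinite_card K -> cofinal_partition K E ->
  is_graph (hub_adj E h) /\ connected (hub_adj E h) /\ same_card V K /\
  chromatic_number_is (hub_adj E h) K /\ ~ is_minor (complete_adj K) (hub_adj E h).
Proof.
move=> natK [E_equiv VK small not_colourable].
split; first exact: hub_adj_graph.
split; first exact: hub_adj_connected.
split=> //; split; first exact: hub_adj_chromatic.
exact: hub_adj_no_complete_minor.
Qed.

(** * The countable case *)

(* The blocks are the intervals [2^k - 1, 2^(k+1) - 1). *)
Definition same_dyadic_block (x y : nat) : Prop := Nat.log2 (S x) = Nat.log2 (S y).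

Lemma dyadic_block_bound x y : same_dyadic_block x y -> y < 2 ^ S (Nat.log2 (S x)).
Proof. by rewrite /same_dyadic_block => ->; have := Nat.log2_spec (S y); lia. Qed.

Lemma dyadic_block_seq k x y :
  In x (seq (2 ^ k - 1) (2 ^ k)) -> In y (seq (2 ^ k - 1) (2 ^ k)) -> same_dyadic_block x y.
Proof.
have log2_k z : In z (seq (2 ^ k - 1) (2 ^ k)) -> Nat.log2 (S z) = k.
  have := Nat.pow_gt_lin_r 2 k; move=> /= pos /in_seq zk.
  apply: Nat.log2_unique; rewrite ?Nat.pow_succ_r'; lia.
by move=> /log2_k xk /log2_k yk; rewrite /same_dyadic_block xk yk.
Qed.

Lemma dyadic_cofinal_partition K :
  infinite_card K -> le_card K nat -> cofinal_partition K same_dyadic_block.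
Proof.
move=> natK Knat; split.
- by split; [move=> x | move=> x y | move=> x y z]; rewrite /same_dyadic_block; congruence.
- by have [f finj] := natK; have [g ginj] := Knat; exact: same_card_of_le_card.
- move=> x Kx; apply: (@nat_not_le_card_fin (2 ^ S (Nat.log2 (S x)))).
  apply: (le_card_trans natK); apply: (le_card_trans Kx).
  exact: le_card_sub (@dyadic_block_bound x).
- move=> mu [_ Kmu] c c_inj; apply: Kmu; apply: (le_card_trans Knat).
  apply: le_card_nat_of_NoDup => k; exists (map c (seq (2 ^ k - 1) (2 ^ k))).
  split; last by rewrite length_map length_seq; have := Nat.pow_gt_lin_r 2 k; lia.
  apply: NoDup_map_NoDup_ForallPairs; last exact: seq_NoDup.
  by move=> x y xk yk; apply: c_inj; exact: dyadic_block_seq xk yk.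
Qed.

(** * The uncountable case *)

Section WellOrder.
Variables (K : Type) (lt : K -> K -> Prop).
Hypothesis lt_wf : well_founded lt.
Hypothesis lt_total : forall x y, lt x y \/ x = y \/ lt y x.

Local Notation seg z := {x | lt x z}.

Definition is_least (P : K -> Prop) (m : K) : Prop := P m /\ forall y, P y -> ~ lt y m.

Lemma exists_least (P : K -> Prop) : (exists x, P x) -> exists m, is_least P m.
Proof.
move=> [x Px]; apply: NNPP => nomin; move: Px.
elim/(well_founded_ind lt_wf): x => x IH Px; apply: nomin; exists x.
by split=> // y Py yx; apply: IH yx Py.
Qed.

Lemma lt_irrefl x : ~ lt x x.
Proof.
move=> xx; have [m [<- least]] := exists_least (eq x) (ex_intro _ x erefl).
exact: least xx.
Qed.

Lemma lt_trans x y z : lt x y -> lt y z -> lt x z.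
Proof.
move=> xy yz; case: (lt_total x z) => [//|zx]; exfalso.
have [m [m_xyz least]] :=
  exists_least (fun t => t = x \/ t = y \/ t = z) (ex_intro _ x (or_introl erefl)).
case: zx => [xz|zx]; first subst z; case: m_xyz => [|[|]] mE; subst m.
all: by [apply: (least x); auto | apply: (least y); auto | apply: (least z); auto].
Qed.

Lemma lt_asym x y : lt x y -> ~ lt y x.
Proof. by move=> xy yx; apply: (lt_irrefl (lt_trans xy yx)). Qed.

Lemma lt_le_trans x y z : lt x y -> ~ lt z y -> lt x z.
Proof.
move=> xy zy; case: (lt_total x z) => [//|[xz|zx]]; first by subst.
by case: zy; apply: lt_trans zx xy.
Qed.

Lemma le_lt_trans x y z : ~ lt y x -> lt y z -> lt x z.
Proof.
move=> yx yz; case: (lt_total x z) => [//|[xz|zx]]; first by subst.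
by case: yx; apply: lt_trans yz zx.
Qed.

Lemma le_card_seg_mono x y : ~ lt y x -> le_card (seg x) (seg y).
Proof. by move=> yx; apply: le_card_sub => t tx; apply: lt_le_trans tx yx. Qed.

Definition least (P : K -> Prop) (default : K) : K := epsilon (inhabits default) (is_least P).

Lemma leastP P default : (exists x, P x) -> is_least P (least P default).
Proof. by move=> exP; apply: epsilon_spec; apply: exists_least. Qed.

Section LimitPoint.
Variable c : K.
Hypothesis c_limit : forall a, lt a c -> exists b, lt a b /\ lt b c.

Let succ a := least (lt a) a.

Let succ_least a b : lt a b -> ~ lt b (succ a).
Proof. by move=> ab; apply: (leastP _ _ (ex_intro _ b ab)).2. Qed.

Let lt_succ a : lt a c -> lt a (succ a).
Proof. by move=> /c_limit [b [ab _]]; apply: (leastP _ _ (ex_intro _ b ab)).1. Qed.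

Let succ_lt a : lt a c -> lt (succ a) c.
Proof. by move=> /c_limit [b [ab bc]]; apply: le_lt_trans (succ_least ab) bc. Qed.

Let succ_inj a a' : lt a c -> lt a' c -> succ a = succ a' -> a = a'.
Proof.
move=> ac a'c e; case: (lt_total a a') => [aa'|[//|a'a]]; exfalso.
- by apply: (succ_least aa'); rewrite e; apply: lt_succ.
- by apply: (succ_least a'a); rewrite -e; apply: lt_succ.
Qed.

Let not_succ l := forall b, lt b l -> succ b <> l.

Let iter_succ_lt n l : lt l c -> lt (Nat.iter n succ l) c.
Proof. by move=> lc; elim: n => [|n IH] //=; apply: succ_lt. Qed.

Let decompose a : lt a c -> exists l n, lt l c /\ not_succ l /\ Nat.iter n succ l = a.
Proof.
elim/(well_founded_ind lt_wf): a => a IH ac.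
case: (classic (exists b, lt b a /\ succ b = a)) => [[b [ba <-]]|a_not_succ].
  have [l [n [lc [l_not_succ <-]]]] := IH b ba (lt_trans ba ac).
  by exists l, (S n).
exists a, 0; do 2!split=> //; move=> b ba e; apply: a_not_succ; by exists b.
Qed.

Let decompose_uniq n m l l' : lt l c -> lt l' c -> not_succ l -> not_succ l' ->
  Nat.iter n succ l = Nat.iter m succ l' -> n = m /\ l = l'.
Proof.
move=> lc l'c l_not_succ l'_not_succ; elim: n m => [|n IH] [|m] //= e.
- by case: (l_not_succ (Nat.iter m succ l')); rewrite e //; apply: lt_succ; apply: iter_succ_lt.
- by case: (l'_not_succ (Nat.iter n succ l)); rewrite -e //; apply: lt_succ; apply: iter_succ_lt.
- by have [-> ->] := IH m (succ_inj (iter_succ_lt n lc) (iter_succ_lt m l'c) e).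
Qed.

(* Writing [a = l + n] with [l] a limit or zero, send [inl a] to [l + 2n] and
   [inr a] to [l + 2n + 1]. *)
Lemma seg_double : le_card (seg c + seg c) (seg c).
Proof.
pose code (s : seg c + seg c) (p : seg c) := exists l n, lt l c /\ not_succ l /\
  match s with
  | inl a => proj1_sig a = Nat.iter n succ l /\ proj1_sig p = Nat.iter (n + n) succ l
  | inr a => proj1_sig a = Nat.iter n succ l /\ proj1_sig p = Nat.iter (S (n + n)) succ l
  end.
apply: (le_card_of_rel code).
  case=> a; have [l [n [lc [l_not_succ an]]]] := decompose (proj2_sig a).
  - by exists (exist (lt^~ c) _ (iter_succ_lt (n + n) lc)), l, n; rewrite an.
  - by exists (exist (lt^~ c) _ (iter_succ_lt (S (n + n)) lc)), l, n; rewrite an.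
move=> s s' p [l [n [lc [l_not_succ sp]]]] [l' [n' [l'c [l'_not_succ s'p]]]].
case: s sp => a [an pa]; case: s' s'p => a' [a'n' pa'];
  have [nn' ll'] := decompose_uniq _ _ lc l'c l_not_succ l'_not_succ (eq_trans (esym pa) pa');
  try (exfalso; lia); f_equal; apply: proj1_sig_inj; rewrite an a'n' ll'; f_equal; lia.
Qed.

End LimitPoint.

Lemma initial_limit c : le_card nat (seg c) ->
  (forall a, lt a c -> ~ le_card (seg c) (seg a)) ->
  forall a, lt a c -> exists b, lt a b /\ lt b c.
Proof.
move=> nat_c c_initial a ac; apply: NNPP => no_between; apply: (c_initial a ac).
have below x : lt x c -> x <> a -> lt x a.
  move=> xc xa; case: (lt_total x a) => [//|[//|ax]].
  by case: no_between; exists x.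
apply: le_card_option_r nat_c _.
exists (fun x => match excluded_middle_informative (proj1_sig x = a) with
  | left _ => None
  | right xa => Some (exist (lt^~ a) _ (below _ (proj2_sig x) xa)) end).
move=> [x ?] [y ?] /=; do 2!case: excluded_middle_informative => ? //=;
  move=> /(f_equal (fun o => if o is Some k then proj1_sig k else a)) /= xy;
  apply: proj1_sig_inj => /=; congruence.
Qed.

Lemma seg_split c c' : le_card (seg c') (seg c + {y | ~ lt y c /\ lt y c'}).
Proof.
exists (fun y => match excluded_middle_informative (lt (proj1_sig y) c) with
  | left yc => inl (exist (lt^~ c) _ yc)
  | right yc => inr (exist _ (proj1_sig y) (conj yc (proj2_sig y))) end).
move=> [x ?] [y ?] /=; do 2!case: excluded_middle_informative => ? //=;
  move=> /(f_equal (fun s => match s with inl a => proj1_sig a | inr b => proj1_sig b end)) /= xy;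
  exact: proj1_sig_inj.
Qed.

Hypothesis seg_small : forall z, ~ le_card K (seg z).

Lemma lt_card_seg z : lt_card (seg z) K.
Proof. by split; [apply: le_card_sig | apply: seg_small]. Qed.

Section Collapse.
Variables (nu : Type) (f : nu -> K).
Hypothesis f_inj : forall a b, f a = f b -> a = b.

Let in_range t := exists a, f a = t.

(* [collapse] enumerates [in_range] in increasing order (the transitive
   collapse of the image of [f]). *)
Let collapse_step x (rec : forall y, lt y x -> K) : K :=
  least (fun w => ~ exists t (tx : lt t x), in_range t /\ rec t tx = w) x.

Let collapse : K -> K := Fix lt_wf (fun _ => K) collapse_step.

Let taken_below x w := exists t (tx : lt t x), in_range t /\ collapse t = w.

Let collapse_least x : is_least (fun w => ~ taken_below x w) (collapse x).
Proof.
rewrite /collapse Fix_eq; last first.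
  move=> y g1 g2 g12; rewrite /collapse_step.
  by have -> : g1 = g2 by do 2!apply: functional_extensionality_dep => ?; apply: g12.
apply: leastP; apply: NNPP => all_taken; apply: (@seg_small x).
apply: (le_card_of_rel (fun w (t : seg x) => collapse (proj1_sig t) = w)) => [w|w w' t <- <- //].
have [t [tx [_ tw]]] : taken_below x w by apply: NNPP => ?; apply: all_taken; exists w.
by exists (exist _ t tx).
Qed.

Let collapse_inj s t : in_range s -> in_range t -> collapse s = collapse t -> s = t.
Proof.
move=> s_in t_in st; case: (lt_total s t) => [lst|[//|lts]]; exfalso.
- by apply: (collapse_least t).1; exists s, lst.
- by apply: (collapse_least s).1; exists t, lts.
Qed.

Lemma le_card_of_unbounded : (forall z, ~ le_card nu (seg z)) -> le_card K nu.
Proof.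
move=> unbounded.
have onto w : exists a, collapse (f a) = w.
  apply: NNPP => missed; apply: (unbounded w).
  have below a : lt (collapse (f a)) w.
    case: (lt_total (collapse (f a)) w) => [//|[hit|w_lt]]; first by case: missed; exists a.
    case: ((collapse_least (f a)).2 w) => // - [t [_ [[b <-] bw]]].
    by case: missed; exists b.
  exists (fun a => exist (lt^~ w) _ (below a)) => a b [] /collapse_inj ab.
  by apply: f_inj; apply: ab; [exists a | exists b].
by apply: (le_card_of_rel (fun w a => collapse (f a) = w) onto) => w w' a <- <-.
Qed.

End Collapse.

Lemma le_card_seg_of_lt_card nu : lt_card nu K -> exists z, le_card nu (seg z).
Proof.
move=> [[f f_inj] Knu]; apply: NNPP => unbounded; apply: Knu.
by apply: (le_card_of_unbounded _ f_inj) => z nuz; apply: unbounded; exists z.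
Qed.

Definition seg_equiv x y : Prop := le_card (seg x) (seg y) /\ le_card (seg y) (seg x).

Lemma seg_equiv_equivalence : Equivalence seg_equiv.
Proof.
split; first by move=> x; split; apply: le_card_refl.
- by move=> x y [].
- move=> x y z [xy yx] [yz zy].
  by split; [apply: le_card_trans xy yz | apply: le_card_trans zy yx].
Qed.

Hypothesis K_limit : limit_card K.

Lemma exists_seg_not_le x : exists w, ~ le_card (seg w) (seg x).
Proof.
have [nu [[_ nu_x] nuK]] := K_limit (lt_card_seg x).
have [w nu_w] := le_card_seg_of_lt_card nuK.
by exists w => w_x; apply: nu_x; apply: le_card_trans nu_w w_x.
Qed.

Lemma seg_equiv_class_small x : ~ le_card K {y | seg_equiv x y}.
Proof.
have [w w_x] := exists_seg_not_le x; move=> K_class; apply: (@seg_small w).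
apply: (le_card_trans K_class); apply: le_card_sub => y [_ yx].
by apply: NNPP => yw; apply: w_x; apply: le_card_trans (le_card_seg_mono yw) yx.
Qed.

Hypothesis nat_lt_K : lt_card nat K.

(* The least element [c] of the class of a large enough [m] is an infinite
   initial ordinal, so |c| + |c| = |c|; if the class, which contains [c, c'),
   were no larger than |c|, then neither would be the next initial ordinal c'. *)
Lemma seg_equiv_class_large mu : lt_card mu K -> exists x, ~ le_card {y | seg_equiv x y} mu.
Proof.
move=> muK; have [nu [[mu_nu _] nuK]] := K_limit muK.
have [z0 nu_z0] := le_card_seg_of_lt_card nuK.
have [z1 nat_z1] := le_card_seg_of_lt_card nat_lt_K.
have [m [z0m z1m]] : exists m, ~ lt m z0 /\ ~ lt m z1.
  case: (lt_total z0 z1) => [z01|[<-|z10]].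
  - by exists z1; split; [apply: lt_asym | apply: lt_irrefl].
  - by exists z0; split; apply: lt_irrefl.
  - by exists z0; split; [apply: lt_irrefl | apply: lt_asym].
exists m => class_mu.
have [c [[m_c c_m] c_least]] :=
  exists_least (seg_equiv m) (ex_intro _ m (conj (le_card_refl _) (le_card_refl _))).
have [c' [c'_big c'_least]] := exists_least _ (exists_seg_not_le m).
have nat_c : le_card nat (seg c).
  exact: le_card_trans nat_z1 (le_card_trans (le_card_seg_mono z1m) m_c).
have c_initial a : lt a c -> ~ le_card (seg c) (seg a).
  move=> ac ca; apply: (c_least a) => //; split; first exact: le_card_trans m_c ca.
  exact: le_card_trans (le_card_seg_mono (lt_asym ac)) c_m.
have interval_small : le_card {y | ~ lt y c /\ lt y c'} (seg c).
  have interval_in_class : le_card {y | ~ lt y c /\ lt y c'} {y | seg_equiv m y}.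
    apply: le_card_sub => y [cy yc']; split; first exact: le_card_trans m_c (le_card_seg_mono cy).
    by apply: NNPP => ym; apply: (c'_least y ym yc').
  apply: (le_card_trans interval_in_class); apply: (le_card_trans class_mu).
  apply: (le_card_trans mu_nu); apply: (le_card_trans nu_z0).
  exact: le_card_trans (le_card_seg_mono z0m) m_c.
apply: c'_big; apply: (le_card_trans (seg_split c c')).
apply: (le_card_trans (le_card_sum (le_card_refl _) interval_small)).
exact: le_card_trans (seg_double (initial_limit nat_c c_initial)) c_m.
Qed.

Lemma seg_equiv_cofinal_partition : cofinal_partition K seg_equiv.
Proof.
split; first exact: seg_equiv_equivalence.
- by exists id, id.
- exact: seg_equiv_class_small.
- move=> mu muK; have [x large] := seg_equiv_class_large muK.
  exact: not_injective_on_large_class seg_equiv_equivalence large.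
Qed.

End WellOrder.

Section WellOrderingPrinciple.
Import eqtype boolp wochoice.

Lemma exists_wellorder (K : Type) :
  exists lt : K -> K -> Prop, well_founded lt /\ forall x y, lt x y \/ x = y \/ lt y x.
Proof.
have [R R_wo] := @well_ordering_principle {classic K}.
have R_chain : wo_chain R predT by apply: withinW.
have R_anti := wo_chain_antisymmetric R_chain.
exists (fun x y => R x y /\ x <> y); split.
- move=> x; apply: NNPP => x_nacc.
  pose nacc := fun y : {classic K} => `[< ~ Acc (fun x y => R x y /\ x <> y) y >].
  have [m [[m_nacc m_least] _]] : exists! m, minimum_of R nacc m.
    by apply: R_wo; exists x; rewrite /in_mem /=; apply/asboolP.
  move: m_nacc => /asboolP; apply; constructor => y [ym y_m]; apply: NNPP => y_nacc.
  apply: y_m; apply: R_anti => //; rewrite ym m_least //.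
  by rewrite /in_mem /=; apply/asboolP.
- move=> x y; case: (Classical_Prop.classic (x = y)) => [|xy]; first by right; left.
  case/orP: (wo_chainW R_chain (x := x) (y := y) erefl erefl) => R_xy; first by left.
  by right; right; split=> // yx; apply: xy.
Qed.
End WellOrderingPrinciple.

Lemma exists_initial_wellorder (K : Type) :
  exists lt : K -> K -> Prop, [/\ well_founded lt, forall x y, lt x y \/ x = y \/ lt y x
                               & forall z, ~ le_card K {x | lt x z}].
Proof.
have [lt0 [lt0_wf lt0_total]] := exists_wellorder K.
case: (classic (exists z, le_card K {x | lt0 x z})) => [K_seg|no_seg]; last first.
  by exists lt0; split=> // z Kz; apply: no_seg; exists z.
have [z0 [[f f_inj] z0_least]] := exists_least lt0_wf _ K_seg.
pose g x := proj1_sig (f x).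
have g_inj x y : g x = g y -> x = y by move=> /proj1_sig_inj /f_inj.
exists (fun x y => lt0 (g x) (g y)); split.
- exact: wf_inverse_image.
- move=> x y; case: (lt0_total (g x) (g y)) => [|[/g_inj|]]; auto.
- move=> z Kz; apply: (z0_least (g z)) (proj2_sig (f z)).
  apply: (le_card_trans Kz).
  exists (fun x => exist (lt0^~ (g z)) (g (proj1_sig x)) (proj2_sig x)).
  by move=> x y [/g_inj] /proj1_sig_inj.
Qed.

Theorem mainTheorem1 (K : Type) (Hinf : infinite_card K) (Hlim : limit_card K) :
  exists (V : Type) (adj : V -> V -> Prop),
    is_graph adj /\ connected adj /\ same_card V K /\
    chromatic_number_is adj K /\ ~ is_minor (complete_adj K) adj.
Proof.
have [V [E partition]] : exists V (E : V -> V -> Prop), cofinal_partition K E.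
  case: (classic (le_card K nat)) => [K_nat|K_uncountable].
  - by exists nat, same_dyadic_block; apply: dyadic_cofinal_partition.
  - have [lt [lt_wf lt_total seg_small]] := exists_initial_wellorder K.
    exists K, (seg_equiv lt).
    exact: seg_equiv_cofinal_partition lt_wf lt_total seg_small Hlim (conj Hinf K_uncountable).
have [_ [g _]] := partition_card partition; have [f _] := Hinf.
exists V, (hub_adj E (g (f 0))); exact: hub_adj_of_cofinal_partition.
Qed.
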